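(* Assume all target-SINRs satisfy $\gamma^{\mathrm{tar}}_i>0$. Let $\boldsymbol{\gamma}^\star$ be an optimal solution of the SINR-assignment problem $$\max_{\boldsymbol{\gamma}\in\mathbf{T}_{\boldsymbol{\gamma}}} |\mathcal{A}(\boldsymbol{\gamma})| \quad\text{s.t.}\quad \boldsymbol{\gamma}\in\mathbf{F}_{\boldsymbol{\gamma}}\cap\mathbf{G}_{\boldsymbol{\gamma}}.$$ Then the power vector $\mathbf{p}(\boldsymbol{\gamma}^\star)=(\mathbf{I}-\mathbf{F}(\boldsymbol{\gamma}^\star))^{-1}\mathbf{U}(\boldsymbol{\gamma}^\star)$ is an optimal solution of the power-allocation problem $$\max_{\mathbf{p}} |\mathcal{S}(\mathbf{p})| \quad\text{s.t.}\quad 0\le p_i\le p^{\max}_i\ \forall i\in\mathcal{M},\quad \mathbf{p}\in\mathbf{G}_{\mathbf{p}},$$ and it is a minimal element (componentwise) of the set of optimal solutions of this power-allocation problem, i.e., no other optimal solution $\mathbf{p}'\neq \mathbf{p}(\boldsymbol{\gamma}^\star)$ satisfies $\mathbf{p}'\le \mathbf{p}(\boldsymbol{\gamma}^\star)$ componentwise.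
   Context: Uplink multi-tier cellular model: users $\mathcal{M}=\{1,\dots,M\}$, base stations (BSs) $\mathcal{B}=\{1,\dots,B\}$, priority levels $\mathcal{K}=\{1,\dots,K\}$ ($1$ = highest). User $i$ is served by BS $b_i$; each user belongs to a priority level, and $\mathcal{M}^{\mathcal{K}}_q$ denotes the set of users with priority $q$. Uplink path gains $h_{m,i}>0$ (from user $i$ to BS $m$), noise powers $N_m>0$ at BS $m$, maximum powers $p_i^{\max}>0$. For a power vector $\mathbf{p}\in\mathbb{R}^M$, the SINR of user $i$ is $\gamma_i(\mathbf{p})=\frac{h_{b_i,i}p_i}{\sum_{j\ne i}h_{b_i,j}p_j+N_{b_i}}$. For an SINR vector $\boldsymbol{\gamma}\ge 0$, $\mathbf{p}(\boldsymbol{\gamma})=(\mathbf{I}-\mathbf{F}(\boldsymbol{\gamma}))^{-1}\mathbf{U}(\boldsymbol{\gamma})$ where $U_i=\gamma_iN_{b_i}/h_{b_i,i}$, $F_{ii}=0$, $F_{ij}=\gamma_i h_{b_i,j}/h_{b_i,i}$ for $i\ne j$ (assumed invertible whenever used). $\mathbf{F}_{\boldsymbol{\gamma}}=\{\boldsymbol{\gamma}: 0\le p_i(\boldsymbol{\gamma})\le p_i^{\max}\ \forall i\}$ (feasible SINR vectors). $\mathbf{T}_{\boldsymbol{\gamma}}=\prod_{i\in\mathcal{M}}\{\gamma^{\mathrm{tar}}_i,0\}$. $\mathcal{A}(\boldsymbol{\gamma})=\{i:\gamma_i>0\}$. $\mathcal{S}(\mathbf{p})=\{i:\gamma_i(\mathbf{p})\ge\gamma^{\mathrm{tar}}_i\}$.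 Priority constraint sets: $\mathbf{G}_{\mathbf{p}}$ is the set of $\mathbf{p}$ such that whenever some $i\in\mathcal{M}^{\mathcal{K}}_q$ with $q>1$ has $\gamma_i(\mathbf{p})\ge\gamma^{\mathrm{tar}}_i$, then $\gamma_j(\mathbf{p})\ge\gamma^{\mathrm{tar}}_j$ for all $j\in\mathcal{M}^{\mathcal{K}}_{q'}$, $q'<q$; $\mathbf{G}_{\boldsymbol{\gamma}}$ is defined identically with $\gamma_i$ in place of $\gamma_i(\mathbf{p})$. *)

(* R is an arbitrary real field (the statement is purely
   algebraic / order-theoretic). Users are 'I_M, base stations 'I_B,
   priority levels 'I_K with level 0 = highest priority (paper's level 1). *)
From HB Require Import structures.
From mathcomp Require Import all_boot all_order all_algebra.
Set Implicit Arguments. Unset Strict Implicit. Unset Printing Implicit Defensive.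
Import Order.TTheory GRing.Theory Num.Theory.
Local Open Scope ring_scope.

Section Model.
Variables (R : realFieldType) (M B K : nat).
Variable (b : 'I_M -> 'I_B).          (* serving BS of user i *)
Variable (prio : 'I_M -> 'I_K).       (* priority level of user i, 0 = highest *)
Variable (h : 'I_B -> 'I_M -> R).     (* h m i : path gain from user i to BS m *)
Variable (N : 'I_B -> R).
Variable (pmax tar : 'I_M -> R).

Definition sinr (p : 'I_M -> R) (i : 'I_M) : R :=
  h (b i) i * p i / (\sum_(j < M | j != i) h (b i) j * p j + N (b i)).

Definition Fmat (g : 'I_M -> R) : 'M[R]_M :=
  \matrix_(i, j) (if i == j then 0 else g i * h (b i) j / h (b i) i).
Definition Uvec (g : 'I_M -> R) : 'cV[R]_M :=
  \col_i (g i * N (b i) / h (b i) i).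

Definition pgam (g : 'I_M -> R) : 'I_M -> R :=
  fun i => (invmx (1%:M - Fmat g) *m Uvec g) i 0.

(* feasible SINR set F_gamma (with I - F(gamma) invertible, as assumed
   whenever p(gamma) is used) *)
Definition Fgam (g : 'I_M -> R) : Prop :=
  [/\ forall i, 0 <= g i,
      (1%:M - Fmat g) \in unitmx &
      forall i, 0 <= pgam g i <= pmax i].

Definition Tgam (g : 'I_M -> R) : Prop := forall i, g i = tar i \/ g i = 0.

Definition Acard (g : 'I_M -> R) : nat := #|[set i : 'I_M | 0 < g i]|.

Definition Scard (p : 'I_M -> R) : nat := #|[set i : 'I_M | tar i <= sinr p i]|.

Definition Gp (p : 'I_M -> R) : Prop :=
  forall i, (0 < (prio i : nat))%N -> tar i <= sinr p i ->
    forall j, ((prio j : nat) < prio i)%N -> tar j <= sinr p j.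
Definition Ggam (g : 'I_M -> R) : Prop :=
  forall i, (0 < (prio i : nat))%N -> tar i <= g i ->
    forall j, ((prio j : nat) < prio i)%N -> tar j <= g j.

Definition sinr_feasible (g : 'I_M -> R) : Prop := Tgam g /\ Fgam g /\ Ggam g.
Definition sinr_optimal (g : 'I_M -> R) : Prop :=
  sinr_feasible g /\ forall g', sinr_feasible g' -> (Acard g' <= Acard g)%N.

Definition pow_feasible (p : 'I_M -> R) : Prop :=
  (forall i, 0 <= p i <= pmax i) /\ Gp p.
Definition pow_optimal (p : 'I_M -> R) : Prop :=
  pow_feasible p /\ forall p', pow_feasible p' -> (Scard p' <= Scard p)%N.
End Model.

From HB Require Import structures.
From mathcomp Require Import all_boot all_order all_algebra.
From mathcomp Require Import ring lra.
Import Order.TTheory GRing.Theory Num.Theory.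
Local Open Scope ring_scope.

(* p(g) is the componentwise least nonnegative power vector meeting the
   SINR targets g of the active users: such a power vector p dominates the
   nonnegative interference matrix F(g) row by row, which makes I - F(g)
   invertible and forces p - p(g) >= 0, since p is a supersolution of the
   equation p = F(g) p + U(g) solved by p(g).  Conversely, a feasible power
   vector p yields the feasible SINR assignment giving each user of S(p) its
   target and switching off the others, with |A| = |S(p)|.  So the optimal
   values agree and p(gstar) is optimal.  An optimal p' <= p(gstar) gives no
   power, hence no SINR, to users outside A(gstar), so it serves exactly
   A(gstar), meets the targets gstar, and therefore p' >= p(gstar). *)

Set Implicit Arguments. Unset Strict Implicit.

Section NonnegativeMatrix.
Variables (R : realFieldType) (M : nat) (A : 'M[R]_M) (x : 'I_M -> R).
Hypotheses (A_ge0 : forall i j, 0 <= A i j) (x_ge0 : forall i, 0 <= x i).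
Hypothesis x_dominates :
  forall i, (forall j, A i j = 0) \/ \sum_j A i j * x j < x i.

Lemma dominates_row0 i : x i = 0 -> forall j, A i j = 0.
Proof.
move=> xi0; case: (x_dominates i) => // lt_i; exfalso; move: lt_i.
by rewrite xi0 ltNge sumr_ge0 // => j _; rewrite mulr_ge0.
Qed.

(* Compare w with the multiple t * x of x, t the least ratio w j / x j:
   if t < 0 the row attaining it would give x i <= \sum_j A i j * x j. *)
Lemma supersolution_ge0 (w : 'I_M -> R) :
  (forall i, \sum_j A i j * w j <= w i) -> forall i, 0 <= w i.
Proof.
move=> w_super.
have null_ge0 i : x i = 0 -> 0 <= w i.
  move=> /dominates_row0 Ai0; apply: le_trans (w_super i).
  by rewrite big1 // => j _; rewrite Ai0 mul0r.
move=> k; rewrite leNgt; apply/negP => wk_lt0.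
have xk_gt0 : 0 < x k.
  rewrite lt_def x_ge0 andbT; apply: contraTneq wk_lt0 => xk0.
  by rewrite -leNgt null_ge0.
have [i _ i_min] := @arg_minP _ R 'I_M k predT (fun j => w j / x j) erefl.
set t := w i / x i in i_min.
have t_lt0 : t < 0.
  by apply: le_lt_trans (i_min k erefl) _; rewrite pmulr_llt0 ?invr_gt0.
have xi_gt0 : 0 < x i.
  rewrite lt_def x_ge0 andbT; apply: contraTneq t_lt0 => xi0.
  by rewrite /t xi0 invr0 mulr0 ltxx.
have tx_le j : t * x j <= w j.
  have [xj0|xj_neq0] := eqVneq (x j) 0; first by rewrite xj0 mulr0 null_ge0.
  by rewrite -ler_pdivlMr ?i_min // lt_def xj_neq0 x_ge0.
have : t * \sum_j A i j * x j <= t * x i.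
  rewrite /t divfK ?gt_eqF // mulr_sumr; apply: le_trans (w_super i).
  by apply: ler_sum => j _; rewrite mulrCA ler_wpM2l.
rewrite ler_nM2l //; case: (x_dominates i) => [Ai0|]; last by rewrite leNgt => ->.
by rewrite big1 ?leNgt ?xi_gt0 // => j _; rewrite Ai0 mul0r.
Qed.

Lemma fixpoint_eq0 (w : 'I_M -> R) :
  (forall i, \sum_j A i j * w j = w i) -> forall i, w i = 0.
Proof.
move=> w_fix i; apply/eqP; rewrite eq_le -oppr_ge0.
rewrite (supersolution_ge0 (w := fun j => - w j)) ?supersolution_ge0 // => k.
  by rewrite -(w_fix k).
by rewrite -(w_fix k) -sumrN; under eq_bigr do rewrite mulrN.
Qed.

Lemma unitmx_1B : 1%:M - A \in unitmx.
Proof.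
rewrite -unitmx_tr -row_free_unit; apply: inj_row_free => v v_ker.
apply/rowP => i; rewrite mxE; apply: (fixpoint_eq0 (w := fun j => v 0 j)) => {}i.
move/rowP: v_ker => /(_ i); rewrite linearB /= trmx1 mulmxBr mulmx1 !mxE => /eqP.
rewrite subr_eq0 => /eqP ->; apply: eq_bigr => j _; by rewrite mxE mulrC.
Qed.

End NonnegativeMatrix.

Section PowerControl.
Variables (R : realFieldType) (M B : nat) (b : 'I_M -> 'I_B).
Variables (h : 'I_B -> 'I_M -> R) (N : 'I_B -> R).
Hypotheses (h_gt0 : forall m i, 0 < h m i) (N_gt0 : forall m, 0 < N m).

Definition meets_sinr (g p : 'I_M -> R) : Prop :=
  forall i, 0 < g i -> g i <= sinr b h N p i.

Lemma Fmat_ge0 g : (forall i, 0 <= g i) -> forall i j, 0 <= Fmat b h g i j.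
Proof.
move=> g_ge0 i j; rewrite mxE; case: eqP => // _.
by rewrite mulr_ge0 ?invr_ge0 ?mulr_ge0 // ltW.
Qed.

Lemma Fmat_row0 g i : g i = 0 -> forall j, Fmat b h g i j = 0.
Proof. by move=> gi0 j; rewrite mxE gi0 !mul0r; case: eqP. Qed.

Lemma Fmat_sum g p i :
  \sum_j Fmat b h g i j * p j =
  g i / h (b i) i * \sum_(j < M | j != i) h (b i) j * p j.
Proof.
rewrite (bigD1 i) //= mxE eqxx mul0r add0r mulr_sumr; apply: eq_bigr => j ji.
by rewrite mxE eq_sym (negbTE ji); ring.
Qed.

Lemma interference_gt0 p i : (forall j, 0 <= p j) ->
  0 < \sum_(j < M | j != i) h (b i) j * p j + N (b i).
Proof.
move=> p_ge0; apply: ltr_wpDl (N_gt0 _).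
by apply: sumr_ge0 => j _; rewrite mulr_ge0 // ltW.
Qed.

Lemma pgam_fixpoint g : 1%:M - Fmat b h g \in unitmx ->
  forall i, pgam b h N g i =
            \sum_j Fmat b h g i j * pgam b h N g j + Uvec b h N g i 0.
Proof.
move=> IF_unit i.
have := mulKVmx IF_unit (Uvec b h N g); move/colP/(_ i).
rewrite mulmxBl mul1mx !mxE => <-; rewrite /pgam [LHS]mxE; ring.
Qed.

Lemma pgam_inactive g i : 1%:M - Fmat b h g \in unitmx -> g i = 0 ->
  pgam b h N g i = 0.
Proof.
move=> IF_unit gi0; rewrite pgam_fixpoint // big1 ?add0r.
  by rewrite mxE gi0 !mul0r.
by move=> j _; rewrite Fmat_row0 ?mul0r.
Qed.

Lemma sinr_pgam g : 1%:M - Fmat b h g \in unitmx ->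
  (forall i, 0 <= pgam b h N g i) -> forall i, sinr b h N (pgam b h N g) i = g i.
Proof.
move=> IF_unit p_ge0 i.
have := interference_gt0 i p_ge0; have := h_gt0 (b i) i.
rewrite /sinr (pgam_fixpoint IF_unit i) Fmat_sum mxE.
set S := \sum_(j < M | j != i) _ => hi_gt0 den_gt0.
by field; rewrite !gt_eqF.
Qed.

Section MinimalPower.
Variables (g p : 'I_M -> R).
Hypotheses (g_ge0 : forall i, 0 <= g i) (p_ge0 : forall i, 0 <= p i).
Hypothesis p_meets : meets_sinr g p.

Lemma meets_sinr_supersolution i :
  \sum_j Fmat b h g i j * p j + Uvec b h N g i 0 <= p i.
Proof.
rewrite Fmat_sum mxE.
have [->|gi_neq0] := eqVneq (g i) 0; first by rewrite !mul0r addr0.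
have gi_gt0 : 0 < g i by rewrite lt_def gi_neq0 g_ge0.
have := p_meets gi_gt0; have := interference_gt0 i p_ge0; have := h_gt0 (b i) i.
rewrite /sinr; set S := \sum_(j < M | j != i) _ => hi_gt0 den_gt0.
rewrite ler_pdivlMr // => sinr_ge.
have -> : g i / h (b i) i * S + g i * N (b i) / h (b i) i =
          g i * (S + N (b i)) / h (b i) i by ring.
by rewrite ler_pdivrMr // [_ * h _ _]mulrC.
Qed.

Lemma meets_sinr_dominates i :
  (forall j, Fmat b h g i j = 0) \/ \sum_j Fmat b h g i j * p j < p i.
Proof.
have [gi0|gi_neq0] := eqVneq (g i) 0; first by left; apply: Fmat_row0.
right; apply: lt_le_trans (meets_sinr_supersolution i); rewrite ltrDl mxE.
by rewrite divr_gt0 ?mulr_gt0 // lt_def gi_neq0 g_ge0.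
Qed.

Lemma meets_sinr_unitmx : 1%:M - Fmat b h g \in unitmx.
Proof. exact: unitmx_1B (Fmat_ge0 g_ge0) p_ge0 meets_sinr_dominates. Qed.

Lemma Uvec_ge0 i : 0 <= Uvec b h N g i 0.
Proof. by rewrite mxE mulr_ge0 ?invr_ge0 ?mulr_ge0 // ltW. Qed.

Lemma pgam_ge0 i : 0 <= pgam b h N g i.
Proof.
apply: (supersolution_ge0 (Fmat_ge0 g_ge0) p_ge0 meets_sinr_dominates) => {}i.
by rewrite [X in _ <= X](pgam_fixpoint meets_sinr_unitmx) lerDl Uvec_ge0.
Qed.

Lemma pgam_le i : pgam b h N g i <= p i.
Proof.
rewrite -subr_ge0; move: i.
apply: (supersolution_ge0 (Fmat_ge0 g_ge0) p_ge0 meets_sinr_dominates) => i.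
under eq_bigr do rewrite mulrBr.
rewrite sumrB (pgam_fixpoint meets_sinr_unitmx i).
have := meets_sinr_supersolution i; lra.
Qed.

End MinimalPower.
End PowerControl.

Section Assignment.
Variables (R : realFieldType) (M B K : nat) (b : 'I_M -> 'I_B) (prio : 'I_M -> 'I_K).
Variables (h : 'I_B -> 'I_M -> R) (N : 'I_B -> R) (pmax tar : 'I_M -> R).
Hypotheses (h_gt0 : forall m i, 0 < h m i) (N_gt0 : forall m, 0 < N m).
Hypothesis tar_gt0 : forall i, 0 < tar i.

Lemma Tgam_target_active g i : Tgam tar g -> (tar i <= g i) = (0 < g i).
Proof. by case/(_ i) => ->; rewrite ?lexx ?tar_gt0 // ltxx leNgt tar_gt0. Qed.

Lemma Scard_sinr_eq p g : Tgam tar g ->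
  (forall i, sinr b h N p i = g i) -> Scard b h N tar p = Acard g.
Proof.
by move=> gT p_sinr; apply: eq_card => i; rewrite !inE p_sinr Tgam_target_active.
Qed.

Lemma pow_feasible_sinr_eq p g : (forall i, 0 <= p i <= pmax i) ->
  Ggam prio tar g -> (forall i, sinr b h N p i = g i) ->
  pow_feasible b prio h N pmax tar p.
Proof.
move=> p_bnd gG p_sinr; split => // i prio_i.
by rewrite !p_sinr => /(gG i prio_i) gG_i j /gG_i; rewrite p_sinr.
Qed.

Definition target_assignment (p : 'I_M -> R) (i : 'I_M) : R :=
  if tar i <= sinr b h N p i then tar i else 0.

Lemma target_assignment_ge0 p i : 0 <= target_assignment p i.
Proof. by rewrite /target_assignment; case: ifP => // _; apply: ltW. Qed.

Lemma target_assignment_reached p i :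
  (tar i <= target_assignment p i) = (tar i <= sinr b h N p i).
Proof.
by rewrite /target_assignment; case: ifP => _; rewrite ?lexx // leNgt tar_gt0.
Qed.

Lemma Acard_target_assignment p : Acard (target_assignment p) = Scard b h N tar p.
Proof.
apply: eq_card => i; rewrite !inE /target_assignment.
by case: ifP => _; rewrite ?tar_gt0 ?ltxx.
Qed.

Lemma meets_sinr_target_assignment p : meets_sinr b h N (target_assignment p) p.
Proof. by move=> i; rewrite /target_assignment; case: ifP => // _; rewrite ltxx. Qed.

Lemma sinr_feasible_target_assignment p : pow_feasible b prio h N pmax tar p ->
  sinr_feasible b prio h N pmax tar (target_assignment p).
Proof.
move=> [p_bnd pG]; have p_ge0 i : 0 <= p i by case/andP: (p_bnd i).
have g_ge0 := @target_assignment_ge0 p.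
have meets := @meets_sinr_target_assignment p.
split; last split; [|split|].
- by move=> i; rewrite /target_assignment; case: ifP => _; [left|right].
- exact: g_ge0.
- exact (meets_sinr_unitmx h_gt0 N_gt0 g_ge0 p_ge0 meets).
- move=> i; rewrite (pgam_ge0 h_gt0 N_gt0 g_ge0 p_ge0 meets).
  apply: le_trans (pgam_le h_gt0 N_gt0 g_ge0 p_ge0 meets i) _.
  by case/andP: (p_bnd i).
- move=> i prio_i; rewrite !target_assignment_reached => /(pG i prio_i) pG_i j.
  by rewrite target_assignment_reached; apply: pG_i.
Qed.

Lemma Scard_le_sinr_optimal g p : sinr_optimal b prio h N pmax tar g ->
  pow_feasible b prio h N pmax tar p -> (Scard b h N tar p <= Acard g)%N.
Proof.
move=> [_ g_opt] /sinr_feasible_target_assignment/g_opt.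
by rewrite Acard_target_assignment.
Qed.

(* Below p(g), a user switched off by g has zero power and hence zero SINR,
   so S(p) lies inside A(g); a cardinality bound forces equality. *)
Lemma meets_sinr_below_pgam g p : Tgam tar g -> 1%:M - Fmat b h g \in unitmx ->
  (forall i, 0 <= p i <= pgam b h N g i) -> (Acard g <= Scard b h N tar p)%N ->
  meets_sinr b h N g p.
Proof.
move=> gT IF_unit p_bnd card_le.
have S_sub : [set i | tar i <= sinr b h N p i] \subset [set i | 0 < g i].
  apply/subsetP => i; rewrite !inE -Tgam_target_active //.
  case: (gT i) => [->|gi0 reached]; first by rewrite lexx.
  have /andP[p_ge0] := p_bnd i; rewrite pgam_inactive // => p_le0.
  move: reached; rewrite /sinr (@le_anti _ _ (p i) 0) ?p_ge0 ?p_le0 //.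
  by rewrite mulr0 mul0r leNgt tar_gt0.
have S_eq : [set i | tar i <= sinr b h N p i] = [set i | 0 < g i].
  by apply/eqP; rewrite eqEcard S_sub.
move=> i gi_gt0; have : i \in [set i | 0 < g i] by rewrite inE.
rewrite -S_eq inE; case: (gT i) => gi; rewrite gi //.
by move: gi_gt0; rewrite gi ltxx.
Qed.

End Assignment.

Unset Implicit Arguments. Set Strict Implicit.

Theorem proposition1 (R : realFieldType) (M B K : nat)
  (b : 'I_M -> 'I_B) (prio : 'I_M -> 'I_K)
  (h : 'I_B -> 'I_M -> R) (N : 'I_B -> R) (pmax tar : 'I_M -> R)
  (hpos : forall m i, 0 < h m i) (Npos : forall m, 0 < N m)
  (pmaxpos : forall i, 0 < pmax i) (tarpos : forall i, 0 < tar i)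
  (gstar : 'I_M -> R)
  (hopt : sinr_optimal b prio h N pmax tar gstar) :
  pow_optimal b prio h N pmax tar (pgam b h N gstar) /\
  (forall p' : 'I_M -> R, pow_optimal b prio h N pmax tar p' ->
     (forall i, p' i <= pgam b h N gstar i) ->
     forall i, p' i = pgam b h N gstar i).
Proof.
have [[gT [[g_ge0 IF_unit ps_bnd] gG]] _] := hopt.
set ps := pgam b h N gstar in ps_bnd *.
have ps_ge0 i : 0 <= ps i by case/andP: (ps_bnd i).
have ps_sinr := sinr_pgam hpos Npos IF_unit ps_ge0.
have S_ps : Scard b h N tar ps = Acard gstar := Scard_sinr_eq tarpos gT ps_sinr.
have ps_feasible := pow_feasible_sinr_eq ps_bnd gG ps_sinr.
split.
  split=> // p' /(Scard_le_sinr_optimal hpos Npos tarpos hopt).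
  by rewrite S_ps.
move=> p' [[p'_bnd _] p'_opt] p'_le i.
have p'_ge0 j : 0 <= p' j by case/andP: (p'_bnd j).
have p'_meets : meets_sinr b h N gstar p'.
  apply: (meets_sinr_below_pgam tarpos gT IF_unit).
    by move=> j; rewrite p'_ge0 p'_le.
  by rewrite -S_ps p'_opt.
apply/eqP; rewrite eq_le p'_le /=.
exact (pgam_le hpos Npos g_ge0 p'_ge0 p'_meets i).
Qed.
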